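(* Let $r>5$ with $r\not\equiv 0\pmod 3$, and let $C_r$ be the directed cycle of length $r$. If there exist positive integers $b,k$ with $k<4b$ such that $C_r$ admits a $b$-fold oriented $k$-coloring, then $r$ is divisible by $4q+3$ for some natural number $q$.
   Context: The directed cycle $C_r$ has vertices $u_i$, $i\in\mathbb{Z}/r\mathbb{Z}$, and arcs $u_iu_{i+1}$. For a set $S$ of $k$ colors, a $b$-fold oriented $k$-coloring of an oriented graph $G$ is a map $f$ from $V(G)$ to the $b$-element subsets of $S$ such that (i) $f(x)\cap f(y)=\emptyset$ for every arc $xy$, and (ii) for all arcs $xy, zw$, $f(x)\cap f(w)\neq\emptyset$ implies $f(y)\cap f(z)=\emptyset$. (A $b$-fold oriented $k$-coloring with $k/b<4$ is called miser in the paper.) *)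

From mathcomp Require Import all_boot.
Unset Printing Implicit Defensive.

(* The directed cycle C_r: vertices u_i, i in Z/rZ (represented by 'I_r),
   arcs u_i u_{i+1}. *)
Definition dcycle_arc (r : nat) : rel 'I_r :=
  fun i j => nat_of_ord j == (i.+1 %% r).

Definition bfold_oriented_coloring (V : finType) (arc : rel V) (b k : nat)
    (f : V -> {set 'I_k}) : Prop :=
  (forall x, #|f x| = b) /\
  (forall x y, arc x y -> [disjoint f x & f y]) /\
  (forall x y z w, arc x y -> arc z w ->
     ~~ [disjoint f x & f w] -> [disjoint f y & f z]).

Definition has_bfold_oriented_coloring (V : finType) (arc : rel V) (b k : nat)
  : Prop := exists f : V -> {set 'I_k}, @bfold_oriented_coloring V arc b k f.

From mathcomp Require Import all_boot zify zmodp.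

(* Let [M p q] say that the colour sets of u_(p mod r) and u_(q mod r) meet.
   Arcs never meet, the orientation condition forbids [M p q.+1] and
   [M p.+1 q] together, and since k < 4b any four vertices contain a meeting
   pair.  These facts force [M p (p + d)] to depend on d only, giving a word
   w(d) = [M 0 d].  Call m an isolated 1 of w if w(m) = 1 and w(m-1) = w(m+1) = 0.
   Up to its first isolated 1, w reads 1001 1001 ..., so that position m is
   3 mod 4.  Every isolated 1 is a period of w and r is one, so r mod m would
   be a smaller isolated 1 unless m divides r. *)

Section OverlapRelation.

Context {r : nat} {M : nat -> nat -> bool}.
Hypothesis r_gt0 : 0 < r.
Hypothesis M_periodic : forall p q, M (p + r) q = M p q.
Hypothesis M_sym : symmetric M.
Hypothesis M_refl : reflexive M.
Hypothesis M_arc : forall p, ~~ M p p.+1.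
Hypothesis M_oriented : forall p q, M p q.+1 -> ~~ M p.+1 q.
Hypothesis M_K4 : forall a b c d, [|| M a b, M a c, M a d, M b c, M b d | M c d].

Lemma M_periodic_r p q : M p (q + r) = M p q.
Proof. by rewrite M_sym M_periodic M_sym. Qed.

Definition uniform d b := forall p, M p (p + d) = b.

Lemma uniform_at {d b} : uniform d b -> forall p q, q = p + d -> M p q = b.
Proof. by move=> Ud p _ ->. Qed.

Lemma uniform0 : uniform 0 true.
Proof. by move=> p; rewrite addn0 M_refl. Qed.

Lemma uniform1 : uniform 1 false.
Proof. by move=> p; rewrite addn1; apply/negbTE. Qed.

Lemma uniformT_S2 {d} : uniform d true -> uniform d.+2 false.
Proof.
move=> Ud p; apply/negbTE; rewrite addnS.
by apply: contraTN (Ud p.+1) => /M_oriented; rewrite addnS.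
Qed.

Lemma uniform2 : uniform 2 false.
Proof. exact: uniformT_S2 uniform0. Qed.

Lemma uniformFF_S2 d : uniform d false -> uniform d.+1 false -> uniform d.+2 true.
Proof.
move=> Ud Ud1 p; have := M_K4 p p.+1 p.+2 (p + d.+2).
rewrite (uniform_at uniform1 p p.+1) ?(uniform_at uniform2 p p.+2)
  ?(uniform_at uniform1 p.+1 p.+2) ?(uniform_at Ud1 p.+1 (p + d.+2))
  ?(uniform_at Ud p.+2 (p + d.+2)) ?orbF //; lia.
Qed.

Lemma uniformFT_S2 d : uniform d false -> uniform d.+1 true ->
  exists b, uniform d.+2 b.
Proof.
move=> Ud Ud1; have Ud3 := uniformT_S2 Ud1.
pose E p := M p (p + d.+2); pose X p := M p (p + d.+4).
have XE p : X p -> ~~ E p.+1.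
  by rewrite /X /E (addnS p d.+3) addSn -(addnS p d.+2); apply: M_oriented.
have EX p : E p || X p.
  have := M_K4 p (p + d.+2) (p + d.+3) (p + d.+4).
  rewrite (uniform_at Ud3 p (p + d.+3)) ?(uniform_at uniform1 (p + d.+2) (p + d.+3))
    ?(uniform_at uniform2 (p + d.+2) (p + d.+4))
    ?(uniform_at uniform1 (p + d.+3) (p + d.+4)) ?orbF //; lia.
have XE2 p : X p || E p.+2.
  have := M_K4 p p.+1 p.+2 (p + d.+4).
  rewrite (uniform_at uniform1 p p.+1) ?(uniform_at uniform2 p p.+2)
    ?(uniform_at uniform1 p.+1 p.+2) ?(uniform_at Ud3 p.+1 (p + d.+4))
    /X /E ?addSn -?addnS //; lia.
have E_S p : E p.+1 = E p.+2.
  apply/idP/idP => He.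
  - by case/orP: (XE2 p) => // /XE; rewrite He.
  - by case/orP: (EX p.+1) => // /XE; rewrite He.
have E_r : E r = E 0.
  by rewrite /E -{1}[r]add0n M_periodic (addnC r) M_periodic_r add0n.
exists (E 0) => p; rewrite -/(E p).
have E1 q : E q.+1 = E 1 by elim: q => // q <-; rewrite -E_S.
by case: p => // p; rewrite E1 -E_r -(prednK r_gt0) E1.
Qed.

Lemma uniform_exists d : exists b, uniform d b.
Proof.
suff [] : (exists b, uniform d b) /\ (exists b, uniform d.+1 b) by [].
elim: d => [|d [[b Ud] [b1 Ud1]]].
  by split; [exists true; apply: uniform0 | exists false; apply: uniform1].
split; first by exists b1.
case: b b1 Ud Ud1 => -[] Ud Ud1.
- by exists false; apply: uniformT_S2.
- by exists false; apply: uniformT_S2.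
- exact: uniformFT_S2.
- by exists true; apply: uniformFF_S2.
Qed.

Lemma M_shift p d : M p (p + d) = M 0 d.
Proof. by have [b Ud] := uniform_exists d; rewrite Ud -(Ud 0). Qed.

Lemma M_dist p q d : q = p + d -> M p q = M 0 d.
Proof. by move=> ->; apply: M_shift. Qed.

Lemma M0_0 : M 0 0.
Proof. exact: M_refl. Qed.

Lemma M0_1 : M 0 1 = false.
Proof. exact: uniform1 0. Qed.

Lemma M0_2 : M 0 2 = false.
Proof. exact: uniform2 0. Qed.

Lemma M0_pred_r : ~~ M 0 r.-1.
Proof. by rewrite M_sym -(M_periodic_r _ 0) -(prednK r_gt0). Qed.

Lemma M0_S2 {x} : M 0 x -> ~~ M 0 x.+2.
Proof. by move=> Mx; apply: contraL Mx => /M_oriented; rewrite (M_dist 1 x.+1 x). Qed.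

Lemma M0_gaps x : ~~ M 0 x -> ~~ M 0 x.+1 -> M 0 x.+2.
Proof.
move=> /negbTE Mx /negbTE Mx1; have := M_K4 0 1 2 x.+2.
rewrite M0_1 M0_2 (M_dist 1 2 1) // (M_dist 1 x.+2 x.+1) // (M_dist 2 x.+2 x) //.
by rewrite M0_1 Mx Mx1 /= orbF.
Qed.

Lemma M0_gap_pairs {a c} : a <= c -> ~~ M 0 a -> ~~ M 0 a.+1 ->
  ~~ M 0 c -> ~~ M 0 c.+1 -> M 0 (c - a).
Proof.
move=> le_ac /negbTE Ma /negbTE Ma1 /negbTE Mc /negbTE Mc1.
have := M_K4 0 1 a.+1 c.+1.
rewrite M0_1 Ma1 Mc1 (M_dist 1 a.+1 a) // (M_dist 1 c.+1 c) // Ma Mc.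
by rewrite (M_dist a.+1 c.+1 (c - a)) //=; lia.
Qed.

Definition isolated n := [&& 0 < n, ~~ M 0 n.-1, M 0 n & ~~ M 0 n.+1].

Lemma isolated_r : isolated r.
Proof.
rewrite /isolated r_gt0 M0_pred_r -[r]add0n M_periodic_r M0_0.
by rewrite -addn1 addnC M_periodic_r M0_1.
Qed.

Lemma isolated_period_step m x : isolated m ->
  M 0 (x + m) = M 0 x -> M 0 (x.+1 + m) = M 0 x.+1 ->
  M 0 (x.+2 + m) = M 0 x.+2.
Proof.
case/and4P=> m_gt0 Mm_pred Mm Mm_succ; rewrite !addSn; set y := x + m => Ey Ey1.
case Mx: (M 0 x).
  by rewrite (negbTE (M0_S2 Mx)) (negbTE (M0_S2 (_ : M 0 y))) ?Ey.
case Mx1: (M 0 x.+1); last by rewrite !M0_gaps ?Ey ?Ey1 ?Mx ?Mx1.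
have [Mx3 My3] : ~~ M 0 x.+3 /\ ~~ M 0 y.+3 by rewrite !M0_S2 ?Ey1.
apply/idP/idP => [My2 | Mx2]; apply/contraT => nM2.
- have le_x2_y3 : x.+2 <= y.+3 by lia.
  have := M0_gap_pairs le_x2_y3 nM2 Mx3 My3 (M0_S2 My2).
  have -> : y.+3 - x.+2 = m.+1 by lia.
  by rewrite (negbTE Mm_succ).
- have le_x3_y2 : x.+3 <= y.+2 by lia.
  have := M0_gap_pairs le_x3_y2 Mx3 (M0_S2 Mx2) nM2 My3.
  have -> : y.+2 - x.+3 = m.-1 by lia.
  by rewrite (negbTE Mm_pred).
Qed.

Lemma isolated_period m : isolated m -> forall x, M 0 (x + m) = M 0 x.
Proof.
move=> Im x; suff [] : M 0 (x + m) = M 0 x /\ M 0 (x.+1 + m) = M 0 x.+1 by [].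
elim: x => [|x [Ex Ex1]]; last by split; last exact: isolated_period_step.
by case/and4P: Im => _ _ Mm /negbTE Mm_succ; rewrite add0n Mm M0_0 add1n Mm_succ M0_1.
Qed.

Lemma isolated_mod {m} : isolated m -> 0 < r %% m -> isolated (r %% m).
Proof.
move=> Im s_gt0.
have Mq x : M 0 (x + r %/ m * m) = M 0 x.
  elim: (r %/ m) => [|q IHq]; first by rewrite addn0.
  by rewrite mulSn addnCA addnC isolated_period.
have Er := divn_eq r m; move: (r %/ m * m) Mq Er => t Mq Er.
rewrite /isolated s_gt0 -(Mq (r %% m).-1) -(Mq (r %% m)) -(Mq (r %% m).+1).
have -> : (r %% m).-1 + t = r.-1 by lia.
have -> : r %% m + t = 0 + r by lia.
have -> : (r %% m).+1 + t = 1 + r by lia.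
by rewrite !M_periodic_r M0_pred_r M0_0 M0_1.
Qed.

Definition pattern1001 y := (y %% 4 == 0) || (y %% 4 == 3).

Lemma pattern1001_rec x :
  pattern1001 x.+3 = ~~ pattern1001 x.+1 && (pattern1001 x || pattern1001 x.+2).
Proof.
rewrite /pattern1001 -(addn3 x) -(addn2 x) -(addn1 x) -!(modnDml x).
by case: (x %% 4) (ltn_mod x 4) => [|[|[|[|i]]]].
Qed.

Lemma pattern1001_rise x : ~~ pattern1001 x -> pattern1001 x.+1 -> x.+1 %% 4 = 3.
Proof.
rewrite /pattern1001 -(addn1 x) -!(modnDml x).
by case: (x %% 4) (ltn_mod x 4) => [|[|[|[|i]]]].
Qed.

Section LeastIsolated.

Context {m : nat}.
Hypothesis m_isolated : isolated m.
Hypothesis m_least : forall n, isolated n -> m <= n.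

Lemma least_isolated_dvd : m %| r.
Proof.
rewrite /dvdn; apply/contraT; rewrite -lt0n => s_gt0.
have := m_least _ (isolated_mod m_isolated s_gt0).
by rewrite leqNgt ltn_mod; case/andP: m_isolated => ->.
Qed.

Lemma M0_rec x : x.+3 <= m -> M 0 x.+3 = ~~ M 0 x.+1 && (M 0 x || M 0 x.+2).
Proof.
move=> x3_le_m; case Mx1: (M 0 x.+1); first exact/negbTE/M0_S2.
case Mx: (M 0 x); first by rewrite M0_gaps ?(negbTE (M0_S2 Mx)) ?Mx1.
have Mx2 : M 0 x.+2 by rewrite M0_gaps ?Mx ?Mx1.
rewrite Mx2; apply/contraT => nMx3.
have := m_least x.+2; rewrite /isolated Mx1 Mx2 nMx3 /=.
by move/(_ isT); rewrite leqNgt x3_le_m.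
Qed.

Lemma M0_pattern x : x <= m -> M 0 x = pattern1001 x.
Proof.
elim/ltn_ind: x => -[|[|[|x]]] IH le_xm; rewrite ?M0_0 ?M0_1 ?M0_2 //.
by rewrite M0_rec // pattern1001_rec !IH //; lia.
Qed.

Lemma least_isolated_mod4 : m %% 4 = 3.
Proof.
case/and4P: m_isolated => m_gt0 Mm_pred Mm _.
rewrite -(prednK m_gt0) pattern1001_rise //; first by rewrite -M0_pattern ?leq_pred.
by rewrite prednK // -M0_pattern.
Qed.

End LeastIsolated.

Theorem overlap_dvd : exists q, (4 * q + 3) %| r.
Proof.
have [m m_isolated m_least] := ex_minnP (ex_intro isolated r isolated_r).
have := least_isolated_mod4 m_isolated m_least => m_mod4.
exists (m %/ 4); have -> : 4 * (m %/ 4) + 3 = m by lia.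
exact: least_isolated_dvd m_isolated m_least.
Qed.

End OverlapRelation.

Lemma card_disjoint4 {T : finType} {A B C D : {set T}} :
  [disjoint A & B] -> [disjoint A & C] -> [disjoint A & D] ->
  [disjoint B & C] -> [disjoint B & D] -> [disjoint C & D] ->
  #|A| + #|B| + #|C| + #|D| <= #|T|.
Proof.
move=> /disjoint_setI0 AB /disjoint_setI0 AC /disjoint_setI0 AD
  /disjoint_setI0 BC /disjoint_setI0 BD /disjoint_setI0 CD.
apply: leq_trans (max_card (mem (A :|: B :|: C :|: D))).
by rewrite !cardsU !setIUl AB AC AD BC BD CD !setU0 !cards0 !subn0.
Qed.

Section CycleColoring.

Context {n b k : nat} (f : 'I_n.+1 -> {set 'I_k}).
Hypothesis b_gt0 : 0 < b.
Hypothesis k_lt4b : k < 4 * b.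
Hypothesis f_card : forall x, #|f x| = b.
Hypothesis f_arc : forall x y, dcycle_arc n.+1 x y -> [disjoint f x & f y].
Hypothesis f_oriented : forall x y z w, dcycle_arc n.+1 x y -> dcycle_arc n.+1 z w ->
  ~~ [disjoint f x & f w] -> [disjoint f y & f z].

Definition overlap p q := ~~ [disjoint f (inZp p) & f (inZp q)].

Lemma arc_inZp p : dcycle_arc n.+1 (inZp p) (inZp p.+1).
Proof. by rewrite /dcycle_arc /= -[(p %% _).+1]addn1 modnDml addn1. Qed.

Lemma overlap_periodic p q : overlap (p + n.+1) q = overlap p q.
Proof.
by rewrite /overlap (_ : inZp (p + n.+1) = inZp p) //; apply: val_inj; rewrite /= modnDr.
Qed.

Lemma overlap_sym : symmetric overlap.
Proof. by move=> p q; rewrite /overlap disjoint_sym. Qed.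

Lemma overlap_refl : reflexive overlap.
Proof. by move=> p; rewrite /overlap -setI_eq0 setIid -card_gt0 f_card. Qed.

Lemma overlap_arc p : ~~ overlap p p.+1.
Proof. by rewrite negbK f_arc ?arc_inZp. Qed.

Lemma overlap_oriented p q : overlap p q.+1 -> ~~ overlap p.+1 q.
Proof. by move/(f_oriented _ _ _ _ (arc_inZp p) (arc_inZp q)); rewrite negbK. Qed.

Lemma overlap_K4 p1 p2 p3 p4 :
  [|| overlap p1 p2, overlap p1 p3, overlap p1 p4, overlap p2 p3, overlap p2 p4
    | overlap p3 p4].
Proof.
apply/contraT; rewrite !negb_or !negbK => /and5P[d12 d13 d14 d23 /andP[d24 d34]].
have := card_disjoint4 d12 d13 d14 d23 d24 d34; rewrite !f_card card_ord leqNgt.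
by rewrite (_ : b + b + b + b = 4 * b) ?k_lt4b // !mulSn mul0n addn0 !addnA.
Qed.

End CycleColoring.

Theorem lemma8 (r : nat) :
  5 < r -> r %% 3 != 0 ->
  (exists b k : nat, 0 < b /\ 0 < k /\ k < 4 * b /\
     @has_bfold_oriented_coloring (ordinal r) (dcycle_arc r) b k) ->
  exists q : nat, (4 * q + 3) %| r.
Proof.
case: r => // n _ _ [b [k [b_gt0 [_ [k_lt4b [f [f_card [f_arc f_oriented]]]]]]]].
exact: (overlap_dvd (ltn0Sn n) (overlap_periodic f) (overlap_sym f)
  (overlap_refl f b_gt0 f_card) (overlap_arc f f_arc)
  (overlap_oriented f f_oriented) (overlap_K4 f k_lt4b f_card)).
Qed.
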